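(* Let $p$ be a privilege and $e$ a $p$-pure expression with $D\vdash e:t$. Then for all principals $n$, all $P\subseteq\mathsf{Privileges}$ and all $h\in[\![D]\!]$ with $\mathsf{pure}\,p\,D(h)$, we have $[\![D\vdash e:t]\!]\,n\,P\,h=[\![D\vdash e:t]\!]\,n\,(P\setminus\{p\})\,h$ and $\mathsf{pure}\,p\,t\,([\![D\vdash e:t]\!]\,n\,P\,h)$.
   Context: Fix sets $\mathsf{Principals}$ and $\mathsf{Privileges}$ and an access control list $\mathcal{A}:\mathsf{Principals}\to\mathcal{P}(\mathsf{Privileges})$. Language. Types: $t::=\mathtt{bool}\mid t_1\to t_2$. Expressions: $e::=\mathtt{true}\mid x\mid \mathtt{if}\ e\ \mathtt{then}\ e_1\ \mathtt{else}\ e_2\mid \lambda x.e\mid e_1\,e_2\mid \mathtt{letrec}\ f(x)=e_1\ \mathtt{in}\ e_2\mid \mathtt{signs}\ n\ e\mid \mathtt{dopriv}\ p\ \mathtt{in}\ e\mid \mathtt{check}\ p\ \mathtt{for}\ e\mid \mathtt{test}\ p\ \mathtt{then}\ e_1\ \mathtt{else}\ e_2$ ($n$ a principal, $p$ a privilege). Typing $D\vdash e:t$ is simply typed ($D$ a finite map from variables to types): $\mathtt{letrec}$ typed by $D,f:t_1\to t_2,x:t_1\vdash e_1:t_2$ and $D,f:t_1\to t_2\vdash e_2:t$; $\mathtt{signs},\mathtt{dopriv},\mathtt{check}$ preserve the body type; $\mathtt{test}$, $\mathtt{if}$ need branches of a common type ($\mathtt{if}$ a $\mathtt{bool}$ guard).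 Eager semantics. $\bot,\star$ are two distinct values, neither booleans nor functions. For a cpo $C$, $C_{\bot\star}=C\cup\{\bot,\star\}$ with $u\le v$ iff $u=\bot$ or $u=v$ or $u,v\in C$, $u\le v$. $[\![\mathtt{bool}]\!]=\{\mathsf{true},\mathsf{false}\}$ and $\mathcal{P}(\mathsf{Privileges})$ ordered by equality; $[\![t_1\to t_2]\!]=\mathcal{P}(\mathsf{Privileges})\to[\![t_1]\!]\to[\![t_2]\!]_{\bot\star}$ (continuous, pointwise order). $[\![D]\!]$: records $h$ with $h.x\in[\![D(x)]\!]$. $[\![D\vdash e:t]\!]\in\mathsf{Principals}\to\mathcal{P}(\mathsf{Privileges})\to[\![D]\!]\to[\![t]\!]_{\bot\star}$, written $[\![e]\!]nPh$. ''let $d=E_1$ in $E_2$'' yields $E_1$ if $E_1\in\{\bot,\star\}$, else $E_2$ with $d:=E_1$. $P\sqcup_n\{p\}$ is $P\cup\{p\}$ if $p\in\mathcal{A}(n)$, else $P$. Equations: $[\![\mathtt{true}]\!]nPh=\mathsf{true}$; $[\![x]\!]nPh=h.x$; $[\![\mathtt{if}\ e\ \mathtt{then}\ e_1\ \mathtt{else}\ e_2]\!]nPh=$ let $b=[\![e]\!]nPh$ in (if $b$ then $[\![e_1]\!]nPh$ else $[\![e_2]\!]nPh$); $[\![\lambda x.e]\!]nPh=\lambda P'.\lambda d.[\![e]\!]nP'(h[x\mapsto d])$; $[\![e_1e_2]\!]nPh=$ let $f=[\![e_1]\!]nPh$ in let $d=[\![e_2]\!]nPh$ in $fPd$; $[\![\mathtt{letrec}\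 f(x)=e_1\ \mathtt{in}\ e_2]\!]nPh=[\![e_2]\!]nP(h[f\mapsto\mathit{fix}\,G])$ with $G(g)=\lambda P'.\lambda d.[\![e_1]\!]nP'(h[f\mapsto g,x\mapsto d])$ (least fixed point); $[\![\mathtt{signs}\ n'\ e]\!]nPh=[\![e]\!]n'(P\cap\mathcal{A}(n'))h$; $[\![\mathtt{dopriv}\ p\ \mathtt{in}\ e]\!]nPh=[\![e]\!]n(P\sqcup_n\{p\})h$; $[\![\mathtt{check}\ p\ \mathtt{for}\ e]\!]nPh=$ if $p\in P$ then $[\![e]\!]nPh$ else $\star$; $[\![\mathtt{test}\ p\ \mathtt{then}\ e_1\ \mathtt{else}\ e_2]\!]nPh=$ if $p\in P$ then $[\![e_1]\!]nPh$ else $[\![e_2]\!]nPh$. Purity. An expression is $p$-pure if it has no subexpression of the form $\mathtt{check}\ p\ \mathtt{for}\ e'$ or $\mathtt{test}\ p\ \mathtt{then}\ e'\ \mathtt{else}\ e''$ (for this same $p$). Semantic $p$-purity $\mathsf{pure}\,p\,t$ on $[\![t]\!]_{\bot\star}$: true on $\bot$ and $\star$; $\mathsf{pure}\,p\,\mathtt{bool}(b)$ true; $\mathsf{pure}\,p\,(t_1\to t_2)(f)$ iff for all $P\subseteq\mathsf{Privileges}$, $d\in[\![t_1]\!]$: $\mathsf{pure}\,p\,t_1(d)$ implies $\mathsf{pure}\,p\,t_2(fPd)$ and $fPd=f(P\setminus\{p\})d$. For $h\in[\![D]\!]$, $\mathsf{pure}\,p\,D(h)$ iff $\mathsf{pure}\,p\,(D(x))(h.x)$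 for all $x$ in $D$. *)

From Stdlib Require Import Arith List ClassicalEpsilon.
Import ListNotations.

Set Implicit Arguments.

Inductive ty : Type :=
| TBool : ty
| TArr : ty -> ty -> ty.

Definition var := nat.

Section Syntax.
Variables (Princ Priv : Type).

Inductive expr : Type :=
| ETrue : expr
| EVar : var -> expr
| EIf : expr -> expr -> expr -> expr
| ELam : var -> expr -> expr
| EApp : expr -> expr -> expr
| ELetrec : var -> var -> expr -> expr -> expr   (* letrec f(x) = e1 in e2 *)
| ESigns : Princ -> expr -> expr
| EDopriv : Priv -> expr -> expr
| ECheck : Priv -> expr -> expr
| ETest : Priv -> expr -> expr -> expr.

Fixpoint ppure (p : Priv) (e : expr) : Prop :=
  match e with
  | ETrue | EVar _ => True
  | EIf e0 e1 e2 => ppure p e0 /\ ppure p e1 /\ ppure p e2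
  | ELam _ e0 => ppure p e0
  | EApp e1 e2 => ppure p e1 /\ ppure p e2
  | ELetrec _ _ e1 e2 => ppure p e1 /\ ppure p e2
  | ESigns _ e0 => ppure p e0
  | EDopriv _ e0 => ppure p e0
  | ECheck q e0 => q <> p /\ ppure p e0
  | ETest q e1 e2 => q <> p /\ ppure p e1 /\ ppure p e2
  end.
End Syntax.

(* Typing contexts D: finite maps from variables to types, as association
   lists; the head binding shadows later ones, so  (x,t)::D  is  D, x:t. *)
Definition ctx := list (var * ty).

Fixpoint lookup (D : ctx) (y : var) : option ty :=
  match D with
  | [] => None
  | (x, t) :: D' => if Nat.eqb y x then Some t else lookup D' y
  end.

(* D |- e : t  (in Type, so that the denotation can recurse on derivations) *)
Inductive typed {Princ Priv : Type} : ctx -> expr Princ Priv -> ty -> Type :=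
| T_True D : typed D (ETrue _ _) TBool
| T_Var D x t : lookup D x = Some t -> typed D (EVar _ _ x) t
| T_If D e e1 e2 t :
    typed D e TBool -> typed D e1 t -> typed D e2 t -> typed D (EIf e e1 e2) t
| T_Lam D x e t1 t2 :
    typed ((x, t1) :: D) e t2 -> typed D (ELam x e) (TArr t1 t2)
| T_App D e1 e2 t1 t2 :
    typed D e1 (TArr t1 t2) -> typed D e2 t1 -> typed D (EApp e1 e2) t2
| T_Letrec D f x e1 e2 t1 t2 t :
    typed ((x, t1) :: (f, TArr t1 t2) :: D) e1 t2 ->
    typed ((f, TArr t1 t2) :: D) e2 t ->
    typed D (ELetrec f x e1 e2) t
| T_Signs D n e t : typed D e t -> typed D (ESigns n e) t
| T_Dopriv D p e t : typed D e t -> typed D (EDopriv p e) t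
| T_Check D p e t : typed D e t -> typed D (ECheck p e) t
| T_Test D p e1 e2 t :
    typed D e1 t -> typed D e2 t -> typed D (ETest p e1 e2) t.

(* Privilege sets P(Privileges) are predicates  Priv -> Prop  (ordered by
   equality).  [[t]] is represented by a carrier  sem t  together with a
   well-formedness predicate (membership in [[t]]) and the cpo order; two
   representatives denote the same element of [[t]] iff they are related
   by the order in both directions (PER-style presentation of the
   continuous function spaces).                                         *)

Inductive lift (X : Type) : Type :=
| Bot : lift X
| Star : lift X     (* star: security exception *)
| Val : X -> lift X.
Arguments Bot {X}. Arguments Star {X}.

Record po (X : Type) := { ple : X -> X -> Prop; pwf : X -> Prop }.

Definition peq X (D : po X) (x y : X) : Prop := ple D x y /\ ple D y x.

Definition chain X (D : po X) (c : nat -> X) : Prop :=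
  (forall k, pwf D (c k)) /\ (forall k, ple D (c k) (c (S k))).

Definition is_lub X (D : po X) (c : nat -> X) (l : X) : Prop :=
  (forall k, ple D (c k) l) /\
  (forall u, pwf D u -> (forall k, ple D (c k) u) -> ple D l u).

Definition lpo X (D : po X) : po (lift X) :=
  {| ple := fun u v =>
        match u, v with
        | Bot, _ => True
        | Star, Star => True
        | Val x, Val y => ple D x y
        | _, _ => False
        end;
     pwf := fun u => match u with Val x => pwf D x | _ => True end |}.

Section Domains.
Variable Priv : Type.
Definition privset := Priv -> Prop.

Fixpoint sem (t : ty) : Type :=
  match t with
  | TBool => bool
  | TArr t1 t2 => privset -> sem t1 -> lift (sem t2)
  end.

(* [[t]]: bool discretely ordered; [[t1 -> t2]] = continuous functions
   P(Privileges) -> [[t1]] -> [[t2]]_{bot,star}, pointwise order.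
   (P(Privileges) is discrete, so continuity is continuity in the [[t1]]
   argument: preservation of lubs of omega-chains.) *)
Fixpoint dom (t : ty) : po (sem t) :=
  match t return po (sem t) with
  | TBool => {| ple := fun x y => x = y; pwf := fun _ => True |}
  | TArr t1 t2 =>
      {| ple := fun f g => forall P d, pwf (dom t1) d ->
                  ple (lpo (dom t2)) (f P d) (g P d);
         pwf := fun f =>
           (forall P d, pwf (dom t1) d -> pwf (lpo (dom t2)) (f P d)) /\
           (forall P c l, chain (dom t1) c -> pwf (dom t1) l ->
              is_lub (dom t1) c l ->
              is_lub (lpo (dom t2)) (fun k => f P (c k)) (f P l)) |}
  end.

Definition seq_l (t : ty) (u v : lift (sem t)) : Prop := peq (lpo (dom t)) u v.

Definition setminus1 (P : privset) (p : Priv) : privset := fun q => P q /\ q <> p.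

Fixpoint pure (p : Priv) (t : ty) : sem t -> Prop :=
  match t return sem t -> Prop with
  | TBool => fun _ => True
  | TArr t1 t2 => fun f =>
      forall P d, pwf (dom t1) d -> pure p t1 d ->
        (match f P d with Val v => pure p t2 v | _ => True end) /\
        seq_l t2 (f P d) (f (setminus1 P p) d)
  end.

Definition pure_l (p : Priv) (t : ty) (u : lift (sem t)) : Prop :=
  match u with Val v => pure p t v | _ => True end.

Definition envT (o : option ty) : Type :=
  match o with Some t => sem t | None => unit end.

Definition env (D : ctx) : Type := forall y : var, envT (lookup D y).

Definition ext (D : ctx) (h : env D) (x : var) (t : ty) (v : sem t)
  : env ((x, t) :: D) :=
  fun y => match Nat.eqb y x as b
                 return envT (if b then Some t else lookup D y) with
           | true => v
           | false => h y
           end.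

Definition owf (o : option ty) : envT o -> Prop :=
  match o return envT o -> Prop with
  | Some t => pwf (dom t)
  | None => fun _ => True
  end.

Definition opure (p : Priv) (o : option ty) : envT o -> Prop :=
  match o return envT o -> Prop with
  | Some t => pure p t
  | None => fun _ => True
  end.

Definition env_wf (D : ctx) (h : env D) : Prop := forall y, owf (lookup D y) (h y).
Definition env_pure (p : Priv) (D : ctx) (h : env D) : Prop :=
  forall y, opure p (lookup D y) (h y).

Definition is_lfp X (D : po X) (G : X -> X) (x : X) : Prop :=
  pwf D x /\ peq D (G x) x /\
  (forall y, pwf D y -> peq D (G y) y -> ple D x y).

Definition fixp (t1 t2 : ty) (G : sem (TArr t1 t2) -> sem (TArr t1 t2))
  : sem (TArr t1 t2) :=
  epsilon (inhabits (fun (_ : privset) (_ : sem t1) => @Bot (sem t2)))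
          (is_lfp (dom (TArr t1 t2)) G).

End Domains.

Arguments ext {Priv D} h x {t} v.
Arguments fixp {Priv t1 t2} G.
Arguments pure {Priv} p t _.
Arguments pure_l {Priv} p t _.
Arguments seq_l {Priv} t u v.
Arguments env_wf {Priv} D h.
Arguments env_pure {Priv} p D h.

Section Denot.
Variables (Princ Priv : Type) (A : Princ -> privset Priv).

Definition dec (Q : Prop) : bool :=
  if excluded_middle_informative Q then true else false.

Definition join_priv (n : Princ) (P : privset Priv) (p : Priv) : privset Priv :=
  if dec (A n p) then (fun q => P q \/ q = p) else P.

Fixpoint den (D : ctx) (e : expr Princ Priv) (t : ty) (d : typed D e t)
  {struct d} : Princ -> privset Priv -> env Priv D -> lift (sem Priv t) :=
  match d in typed D e t
        return Princ -> privset Priv -> env Priv D -> lift (sem Priv t) with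
  | @T_True _ _ _ => fun n P h => Val true
  | @T_Var _ _ D x t Hx => fun n P h =>
      Val (eq_rect (lookup D x) (envT Priv) (h x) (Some t) Hx)
  | @T_If _ _ _ _ _ _ _ d0 d1 d2 => fun n P h =>
      match den d0 n P h with
      | Bot => Bot
      | Star => Star
      | Val b => if b then den d1 n P h else den d2 n P h
      end
  | @T_Lam _ _ _ x _ _ _ d1 => fun n P h =>
      Val (fun P' v => den d1 n P' (ext h x v))
  | @T_App _ _ _ _ _ _ _ d1 d2 => fun n P h =>
      match den d1 n P h with
      | Bot => Bot
      | Star => Star
      | Val f =>
          match den d2 n P h with
          | Bot => Bot
          | Star => Star
          | Val v => f P v
          end
      end
  | @T_Letrec _ _ _ f x _ _ _ _ _ d1 d2 => fun n P h =>
      den d2 n P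
        (ext h f
           (fixp (fun g => fun P' v => den d1 n P' (ext (ext h f g) x v))))
  | @T_Signs _ _ _ n' _ _ d1 => fun n P h => den d1 n' (fun q => P q /\ A n' q) h
  | @T_Dopriv _ _ _ p _ _ d1 => fun n P h => den d1 n (join_priv n P p) h
  | @T_Check _ _ _ p _ _ d1 => fun n P h => if dec (P p) then den d1 n P h else Star
  | @T_Test _ _ _ p _ _ _ d1 d2 => fun n P h =>
      if dec (P p) then den d1 n P h else den d2 n P h
  end.

End Denot.

(* Induction on the typing derivation, with semantic purity as the logical
   relation: only [check p] and [test p] look at [p], while [signs] and
   [dopriv] commute with removing [p] from the privilege set ([dopriv p] at
   worst adds it back).  The real work is [letrec], whose denotation is a
   least fixed point obtained by choice.  By Kleene's theorem it is the lub of
   the iterates of the functional from bottom, and purity is preserved by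
   lubs of chains; but Kleene's theorem needs a continuous functional, so we
   first show that every denotation is continuous in its environment, which
   in turn needs least fixed points to depend continuously on a parameter. *)

From Stdlib Require Import Arith Lia List ClassicalEpsilon Classical
  FunctionalExtensionality PropExtensionality.

Set Implicit Arguments.
Unset Strict Implicit.

Section Preorder.
Variables (X : Type) (O : po X).
Hypothesis le_refl : forall x, ple O x x.
Hypothesis le_trans : forall x y z, ple O x y -> ple O y z -> ple O x z.

Lemma chain_mono (c : nat -> X) :
  (forall k, ple O (c k) (c (S k))) -> forall k k', k <= k' -> ple O (c k) (c k').
Proof. intros Hc k k' Hk. induction Hk; eauto. Qed.

Lemma lub_unique (c : nat -> X) l1 l2 :
  is_lub O c l1 -> is_lub O c l2 -> pwf O l1 -> pwf O l2 -> peq O l1 l2.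
Proof. intros [U1 L1] [U2 L2] W1 W2. split; [apply L1 | apply L2]; auto. Qed.

Lemma lub_peq (c : nat -> X) l l' : is_lub O c l -> peq O l l' -> is_lub O c l'.
Proof.
  intros [U L] [H1 H2]. split.
  - intro k. exact (le_trans (U k) H1).
  - intros u Wu Hu. exact (le_trans H2 (L u Wu Hu)).
Qed.

Lemma lub_const x : is_lub O (fun _ => x) x.
Proof. split; auto. intros u _ Hu. apply (Hu 0). Qed.

Lemma lub_tail (c : nat -> X) l k0 :
  (forall k, ple O (c k) (c (S k))) -> is_lub O c l -> is_lub O (fun k => c (k0 + k)) l.
Proof.
  intros Hc [U L]. split; [intro; apply U |].
  intros u Wu Hu. apply L; auto. intro k.
  apply (le_trans (y := c (k0 + k))); [apply chain_mono; auto; lia | apply Hu].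
Qed.

Lemma lub_untail (c : nat -> X) l k0 :
  (forall k, ple O (c k) (c (S k))) -> is_lub O (fun k => c (k0 + k)) l -> is_lub O c l.
Proof.
  intros Hc [U L]. split; [| intros u Wu Hu; apply L; auto].
  intro k. apply (le_trans (y := c (k0 + k))); [apply chain_mono; auto; lia | apply U].
Qed.

Lemma lub_le (c c' : nat -> X) l l' :
  (forall k, ple O (c k) (c' k)) -> is_lub O c l -> is_lub O c' l' -> pwf O l' -> ple O l l'.
Proof. intros H [U L] [U' L'] W. apply L; eauto. Qed.

Lemma lub_exchange (a : nat -> nat -> X) (r s : nat -> X) l :
  (forall k, is_lub O (a k) (r k)) -> (forall n, is_lub O (fun k => a k n) (s n)) ->
  (forall k, pwf O (r k)) -> (forall n, pwf O (s n)) ->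
  is_lub O s l -> pwf O l -> is_lub O r l.
Proof.
  intros Hr Hs Wr Ws [U L] Wl. split.
  - intro k. apply (proj2 (Hr k)); auto. intro n.
    apply (le_trans (y := s n)); [apply (proj1 (Hs n)) | apply U].
  - intros u Wu Hu. apply L; auto. intro n. apply (proj2 (Hs n)); auto.
    intro k. apply (le_trans (y := r k)); [apply (proj1 (Hr k)) | apply Hu].
Qed.

End Preorder.

Section Lift.
Variables (X : Type) (O : po X).
Hypothesis le_refl : forall x, ple O x x.
Hypothesis le_trans : forall x y z, ple O x y -> ple O y z -> ple O x z.

Lemma lift_refl (u : lift X) : ple (lpo O) u u.
Proof. destruct u; simpl; auto. Qed.

Lemma lift_trans (u v w : lift X) :
  ple (lpo O) u v -> ple (lpo O) v w -> ple (lpo O) u w.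
Proof. destruct u, v, w; simpl; try tauto. apply le_trans. Qed.

Lemma lift_chain_mono (c : nat -> lift X) :
  chain (lpo O) c -> forall k k', k <= k' -> ple (lpo O) (c k) (c k').
Proof. intros [_ Hc]. exact (chain_mono lift_refl lift_trans Hc). Qed.

Lemma val_lub (c : nat -> X) l :
  is_lub O c l -> is_lub (lpo O) (fun k => Val (c k)) (Val l).
Proof.
  intros [U L]. split; [exact U |].
  intros [| | u] Wu Hu; simpl; [exact (Hu 0) | exact (Hu 0) | apply L; auto].
Qed.

Lemma val_lub_inv (c : nat -> X) l :
  is_lub (lpo O) (fun k => Val (c k)) (Val l) -> is_lub O c l.
Proof. intros [U L]. split; [exact U | intros u Wu Hu; exact (L (Val u) Wu Hu)]. Qed.

Lemma star_lub (c : nat -> lift X) k0 :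
  (forall k, ple (lpo O) (c k) (c (S k))) -> (forall k, k0 <= k -> c k = Star) ->
  is_lub (lpo O) c Star.
Proof.
  intros Hc H. split.
  - intro k. apply lift_trans with (c (max k k0)).
    + apply (chain_mono lift_refl lift_trans Hc); lia.
    + rewrite H by lia. exact I.
  - intros u _ Hu. specialize (Hu k0). rewrite H in Hu; auto.
Qed.

Lemma lift_chain_cases (c : nat -> lift X) : chain (lpo O) c ->
  (forall k, c k = Bot) \/ (exists k0, forall k, k0 <= k -> c k = Star) \/
  (exists k0 cx, (forall k, c (k0 + k) = Val (cx k)) /\ chain O cx).
Proof.
  intros Hc.
  destruct (classic (exists k, c k <> Bot)) as [[k0 Hk0] | Hn].
  2: { left. intro k. destruct (c k) eqn:E; auto; exfalso; apply Hn; exists k; congruence. }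
  assert (Hge : forall k, k0 <= k -> ple (lpo O) (c k0) (c k))
    by (intros; apply lift_chain_mono; auto).
  destruct (c k0) as [| | x] eqn:E; [congruence | |].
  - right; left. exists k0. intros k Hk. specialize (Hge k Hk). destruct (c k); simpl in Hge; tauto.
  - right; right. exists k0, (fun j => match c (k0 + j) with Val y => y | _ => x end).
    assert (HV : forall j, c (k0 + j) = Val (match c (k0 + j) with Val y => y | _ => x end)).
    { intro j. specialize (Hge (k0 + j) ltac:(lia)). destruct (c (k0 + j)); simpl in Hge; tauto. }
    split; [exact HV |]. destruct Hc as [W M]. split.
    + intro j. specialize (W (k0 + j)). rewrite HV in W. exact W.
    + intro j. specialize (M (k0 + j)). rewrite <- Nat.add_succ_r, (HV j), (HV (S j)) in M. exact M.
Qed.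

Hypothesis has_lub : forall c, chain O c -> exists l, pwf O l /\ is_lub O c l.

Lemma lift_val_tail_lub (c : nat -> lift X) k0 cx : chain (lpo O) c ->
  (forall k, c (k0 + k) = Val (cx k)) -> chain O cx ->
  exists l, pwf O l /\ is_lub O cx l /\ is_lub (lpo O) c (Val l).
Proof.
  intros Hc H1 H2. destruct (has_lub H2) as [l [Wl Hl]]. exists l. do 2 (split; auto).
  apply lub_untail with (k0 := k0); [exact lift_refl | exact lift_trans | exact (proj2 Hc) |].
  replace (fun k => c (k0 + k)) with (fun k => Val (cx k)) by (extensionality k; auto).
  apply val_lub; auto.
Qed.

Lemma lift_has_lub (c : nat -> lift X) :
  chain (lpo O) c -> exists l, pwf (lpo O) l /\ is_lub (lpo O) c l.
Proof.
  intros Hc. destruct (lift_chain_cases Hc) as [H | [[k0 H] | [k0 [cx [H1 H2]]]]].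
  - exists Bot. split; [exact I |]. split; [intro k; rewrite H; exact I | intros; exact I].
  - exists Star. split; [exact I | exact (star_lub (proj2 Hc) H)].
  - destruct (@lift_val_tail_lub c k0 cx Hc H1 H2) as [l [Wl [_ Hl]]]. exists (Val l); auto.
Qed.

Lemma lift_lub_cases (c : nat -> lift X) l :
  chain (lpo O) c -> is_lub (lpo O) c l -> pwf (lpo O) l ->
  (l = Bot /\ forall k, c k = Bot) \/
  (l = Star /\ exists k0, forall k, k0 <= k -> c k = Star) \/
  (exists x k0 cx, l = Val x /\ (forall k, c (k0 + k) = Val (cx k)) /\
     chain O cx /\ is_lub O cx x).
Proof.
  intros Hc Hl Wl. destruct (lift_chain_cases Hc) as [H | [[k0 H] | [k0 [cx [H1 H2]]]]].
  - left. split; auto.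
    assert (Hb : ple (lpo O) l Bot) by (apply Hl; [exact I | intro k; rewrite H; exact I]).
    destruct l; simpl in Hb; tauto.
  - right; left. split; [| eauto].
    destruct (lub_unique Hl (star_lub (proj2 Hc) H) Wl I) as [_ A2]. destruct l; simpl in A2; tauto.
  - right; right. destruct (@lift_val_tail_lub c k0 cx Hc H1 H2) as [x [Wx [Hx HL]]].
    destruct (lub_unique Hl HL Wl Wx) as [A1 A2].
    destruct l as [| | y]; simpl in A1, A2; try tauto.
    exists y, k0, cx. split; [reflexivity | split; [exact H1 | split; [exact H2 |]]].
    exact (lub_peq le_trans Hx (conj A2 A1)).
Qed.

End Lift.

Section Domains.
Context {Priv : Type}.
Notation dm := (dom Priv).
Notation ld t := (lpo (dom Priv t)).

Lemma dom_refl t (x : sem Priv t) : ple (dm t) x x.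
Proof. induction t; simpl; auto. intros P d _. apply lift_refl, IHt2. Qed.

Lemma dom_trans t (x y z : sem Priv t) : ple (dm t) x y -> ple (dm t) y z -> ple (dm t) x z.
Proof.
  revert x y z. induction t; simpl; [congruence |].
  intros f g h H1 H2 P d Hd. eapply lift_trans; [apply IHt2 | apply H1 | apply H2]; auto.
Qed.

Lemma ldom_refl t (u : lift (sem Priv t)) : ple (ld t) u u.
Proof. apply lift_refl, dom_refl. Qed.

Lemma ldom_trans t (u v w : lift (sem Priv t)) :
  ple (ld t) u v -> ple (ld t) v w -> ple (ld t) u w.
Proof. apply lift_trans, dom_trans. Qed.

Lemma dom_chain_mono {t} {c : nat -> sem Priv t} :
  chain (dm t) c -> forall k k', k <= k' -> ple (dm t) (c k) (c k').
Proof. intros [_ Hc]. exact (chain_mono (@dom_refl t) (@dom_trans t) Hc). Qed.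

(* Continuity implies monotonicity: apply it to the chain [d, d', d', ...]. *)
Lemma fun_mono t1 t2 (f : sem Priv (TArr t1 t2)) P d d' :
  pwf (dm (TArr t1 t2)) f -> pwf (dm t1) d -> pwf (dm t1) d' -> ple (dm t1) d d' ->
  ple (ld t2) (f P d) (f P d').
Proof.
  intros [_ Cf] Hd Hd' Hle.
  pose (c := fun k : nat => match k with 0 => d | _ => d' end).
  assert (Hc : chain (dm t1) c).
  { split; intros [| k]; simpl; auto using dom_refl. }
  assert (Hl : is_lub (dm t1) c d').
  { split; [intros [| k]; simpl; auto using dom_refl | intros u _ Hu; apply (Hu 1)]. }
  exact (proj1 (Cf P c d' Hc Hd' Hl) 0).
Qed.

Lemma pointwise_lub t1 t2 (c : nat -> sem Priv (TArr t1 t2)) l :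
  (forall P d, pwf (dm t1) d -> is_lub (ld t2) (fun k => c k P d) (l P d)) ->
  is_lub (dm (TArr t1 t2)) c l.
Proof.
  intros H. split.
  - intros k P d Hd. apply (proj1 (H P d Hd) k).
  - intros u Wu Hu P d Hd. apply (proj2 (H P d Hd)); [apply (proj1 Wu P d Hd) |].
    intro k. apply (Hu k P d Hd).
Qed.

Lemma chain_app t1 t2 (c : nat -> sem Priv (TArr t1 t2)) P d :
  chain (dm (TArr t1 t2)) c -> pwf (dm t1) d -> chain (ld t2) (fun k => c k P d).
Proof. intros [W M] Hd. split; intro k; [apply (proj1 (W k) P d Hd) | apply (M k P d Hd)]. Qed.

(* The pointwise lub is again continuous because the two lubs commute. *)
Lemma fun_has_pointwise_lub t1 t2 :
  (forall c, chain (dm t2) c -> exists l, pwf (dm t2) l /\ is_lub (dm t2) c l) ->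
  forall c, chain (dm (TArr t1 t2)) c ->
  exists g, pwf (dm (TArr t1 t2)) g /\
    forall P d, pwf (dm t1) d -> is_lub (ld t2) (fun k => c k P d) (g P d).
Proof.
  intros Hlub2 c Hc.
  pose (g := fun P d => epsilon (inhabits (@Bot (sem Priv t2)))
      (fun l => pwf (ld t2) l /\ is_lub (ld t2) (fun k => c k P d) l)).
  assert (Hg : forall P d, pwf (dm t1) d ->
     pwf (ld t2) (g P d) /\ is_lub (ld t2) (fun k => c k P d) (g P d)).
  { intros P d Hd. apply epsilon_spec.
    apply (lift_has_lub (@dom_refl t2) (@dom_trans t2) Hlub2), chain_app; auto. }
  exists g. split; [split | intros; apply Hg; auto].
  - intros P d Hd. apply Hg; auto.
  - intros P e l He Wl Hl. split.
    + intro j. apply (proj2 (proj2 (Hg P (e j) (proj1 He j)))); [apply Hg; auto |].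
      intro k. apply ldom_trans with (c k P l).
      * apply fun_mono; [apply (proj1 Hc) | apply (proj1 He) | exact Wl | apply (proj1 Hl)].
      * apply (proj1 (proj2 (Hg P l Wl)) k).
    + intros u Wu Hu. apply (proj2 (proj2 (Hg P l Wl))); auto.
      intro k. apply (proj2 (proj2 (proj1 Hc k) P e l He Wl Hl)); auto.
      intro j. apply ldom_trans with (g P (e j)); [| apply Hu].
      apply (proj1 (proj2 (Hg P (e j) (proj1 He j))) k).
Qed.

Lemma dom_has_lub t (c : nat -> sem Priv t) :
  chain (dm t) c -> exists l, pwf (dm t) l /\ is_lub (dm t) c l.
Proof.
  revert c. induction t as [| t1 _ t2 IHt2]; intros c Hc.
  - exists (c 0). split; [exact I |].
    assert (E : forall k, c k = c 0)
      by (induction k; [reflexivity | rewrite <- IHk; symmetry; apply Hc]).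
    split; [intro k; apply E | intros u _ Hu; apply (Hu 0)].
  - destruct (fun_has_pointwise_lub IHt2 Hc) as [g [Wg Hg]].
    exists g. split; [exact Wg | apply pointwise_lub, Hg].
Qed.

Lemma lub_pointwise t1 t2 (c : nat -> sem Priv (TArr t1 t2)) l P d :
  chain (dm (TArr t1 t2)) c -> is_lub (dm (TArr t1 t2)) c l -> pwf (dm (TArr t1 t2)) l ->
  pwf (dm t1) d -> is_lub (ld t2) (fun k => c k P d) (l P d).
Proof.
  intros Hc Hl Wl Hd.
  destruct (fun_has_pointwise_lub (@dom_has_lub t2) Hc) as [g [Wg Hg]].
  destruct (lub_unique Hl (pointwise_lub Hg) Wl Wg) as [A1 A2].
  exact (lub_peq (@ldom_trans t2) (Hg P d Hd) (conj (A2 P d Hd) (A1 P d Hd))).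
Qed.

Lemma lub_diag t1 t2 (Fc : nat -> sem Priv (TArr t1 t2)) F (Vc : nat -> sem Priv t1) V P :
  chain (dm (TArr t1 t2)) Fc -> is_lub (dm (TArr t1 t2)) Fc F -> pwf (dm (TArr t1 t2)) F ->
  chain (dm t1) Vc -> is_lub (dm t1) Vc V -> pwf (dm t1) V ->
  is_lub (ld t2) (fun k => Fc k P (Vc k)) (F P V).
Proof.
  intros HF LF WF HV LV WV. split.
  - intro k. apply ldom_trans with (Fc k P V).
    + apply fun_mono; [apply (proj1 HF) | apply (proj1 HV) | exact WV | apply (proj1 LV)].
    + apply (proj1 LF k P V WV).
  - intros u Wu Hu. apply (proj2 (lub_pointwise P HF LF WF WV)); auto.
    intro k. apply (proj2 (proj2 (proj1 HF k) P Vc V HV WV LV)); auto.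
    intro j. apply ldom_trans with (Fc (max k j) P (Vc (max k j))); [| apply Hu].
    apply ldom_trans with (Fc k P (Vc (max k j))).
    + apply fun_mono; [apply (proj1 HF) | apply (proj1 HV) .. | apply dom_chain_mono; auto; lia].
    + apply (dom_chain_mono HF (Nat.le_max_l k j)), (proj1 HV).
Qed.

Lemma pure_lub (p : Priv) t (c : nat -> sem Priv t) l :
  chain (dm t) c -> (forall k, pure p t (c k)) -> is_lub (dm t) c l -> pwf (dm t) l ->
  pure p t l.
Proof.
  revert c l. induction t as [| t1 _ t2 IHt2]; simpl; auto.
  intros c l Hc Hp Hl Wl P d Hd Hpd.
  pose proof (lub_pointwise P Hc Hl Wl Hd) as L1.
  pose proof (lub_pointwise (setminus1 P p) Hc Hl Wl Hd) as L2.
  split; [| split].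
  - destruct (lift_lub_cases (@dom_refl t2) (@dom_trans t2) (@dom_has_lub t2)
      (chain_app P Hc Hd) L1 (proj1 Wl P d Hd))
      as [[E _] | [[E _] | [x [k0 [cx [E [H1 [H2 H3]]]]]]]]; rewrite E; auto.
    apply (IHt2 cx); auto.
    + intro j. specialize (Hp (k0 + j) P d Hd Hpd). rewrite H1 in Hp. apply Hp.
    + pose proof (proj1 Wl P d Hd) as Wx. rewrite E in Wx. exact Wx.
  - apply (proj2 L1); [apply (proj1 Wl _ d Hd) |]. intro k.
    apply ldom_trans with (c k (setminus1 P p) d); [apply (Hp k P d Hd Hpd) | apply (proj1 L2)].
  - apply (proj2 L2); [apply (proj1 Wl _ d Hd) |]. intro k.
    apply ldom_trans with (c k P d); [apply (Hp k P d Hd Hpd) | apply (proj1 L1)].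
Qed.

End Domains.

(* The least fixed point [fixp (G h)] of a continuous [G h], studied as a
   function of a continuously varying parameter [h] (the environment). *)
Section LeastFixpoint.
Context {Priv : Type} {t1 t2 : ty}.
Notation FT := (TArr t1 t2).
Notation FD := (dom Priv FT).
Notation F := (sem Priv FT).
Variables (H : Type) (Hwf : H -> Prop) (Hle : H -> H -> Prop)
  (Hlub : (nat -> H) -> H -> Prop) (G : H -> F -> F).
Hypothesis Hle_refl : forall h, Hle h h.
Hypothesis Hlub_const : forall h, Hlub (fun _ => h) h.
Hypothesis G_wf : forall h g, Hwf h -> pwf FD g -> pwf FD (G h g).
Hypothesis G_mono : forall h1 h2 g1 g2, Hwf h1 -> Hwf h2 -> Hle h1 h2 ->
  pwf FD g1 -> pwf FD g2 -> ple FD g1 g2 -> ple FD (G h1 g1) (G h2 g2).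
Hypothesis G_cont : forall hc h gc g,
  (forall k, Hwf (hc k)) -> (forall k, Hle (hc k) (hc (S k))) -> Hwf h -> Hlub hc h ->
  chain FD gc -> is_lub FD gc g -> pwf FD g ->
  is_lub FD (fun k => G (hc k) (gc k)) (G h g).

Definition botf : F := fun _ _ => Bot.

Lemma botf_wf : pwf FD botf.
Proof. split; [intros; exact I | intros; exact (lub_const (@ldom_refl _ t2) Bot)]. Qed.

Lemma botf_le g : ple FD botf g.
Proof. intros P d _. exact I. Qed.

Fixpoint kleene_iter (h : H) (n : nat) : F :=
  match n with 0 => botf | S n => G h (kleene_iter h n) end.

Lemma kleene_iter_wf h n : Hwf h -> pwf FD (kleene_iter h n).
Proof. intros Hh. induction n; [apply botf_wf | apply G_wf; auto]. Qed.

Lemma kleene_iter_le h1 h2 n :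
  Hwf h1 -> Hwf h2 -> Hle h1 h2 -> ple FD (kleene_iter h1 n) (kleene_iter h2 n).
Proof.
  intros W1 W2 L. induction n; [apply botf_le |]. apply G_mono; auto using kleene_iter_wf.
Qed.

Lemma kleene_chain h : Hwf h -> chain FD (kleene_iter h).
Proof.
  intros Hh. split; [intro; apply kleene_iter_wf; auto |].
  intro n. induction n; [apply botf_le |].
  apply G_mono; auto using kleene_iter_wf, G_wf.
Qed.

Lemma kleene_lub_is_lfp h l : Hwf h -> is_lub FD (kleene_iter h) l -> pwf FD l ->
  is_lfp FD (G h) l.
Proof.
  intros Hh Hl Wl. split; [exact Wl | split].
  - apply (lub_unique (c := fun k => G h (kleene_iter h k))).
    + apply (G_cont (hc := fun _ => h)); auto using kleene_chain.
    + exact (lub_tail (@dom_refl Priv FT) (@dom_trans Priv FT) 1 (proj2 (kleene_chain Hh)) Hl).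
    + apply G_wf; auto.
    + exact Wl.
  - intros y Wy [Ey _]. apply (proj2 Hl); auto. intro n. induction n; [apply botf_le |].
    apply dom_trans with (G h y); [apply G_mono; auto using kleene_iter_wf | exact Ey].
Qed.

Lemma fixp_kleene h : Hwf h -> pwf FD (fixp (G h)) /\ is_lub FD (kleene_iter h) (fixp (G h)).
Proof.
  intros Hh. destruct (dom_has_lub (kleene_chain Hh)) as [l [Wl Hl]].
  pose proof (kleene_lub_is_lfp Hh Hl Wl) as Fl.
  assert (Ff : is_lfp FD (G h) (fixp (G h))) by (unfold fixp; apply epsilon_spec; eauto).
  destruct Ff as [Wf [Ef Lf]]. destruct Fl as [_ [El Ll]].
  split; [exact Wf |].
  exact (lub_peq (@dom_trans Priv FT) Hl (conj (Ll _ Wf Ef) (Lf _ Wl El))).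
Qed.

Lemma fixp_wf h : Hwf h -> pwf FD (fixp (G h)).
Proof. intros Hh. apply (fixp_kleene Hh). Qed.

Lemma fixp_mono h1 h2 : Hwf h1 -> Hwf h2 -> Hle h1 h2 -> ple FD (fixp (G h1)) (fixp (G h2)).
Proof.
  intros W1 W2 L.
  apply (lub_le (@dom_refl Priv FT) (@dom_trans Priv FT)
           (c := kleene_iter h1) (c' := kleene_iter h2));
    auto using kleene_iter_le, fixp_wf; apply fixp_kleene; auto.
Qed.

Lemma fixp_cont hc h : (forall k, Hwf (hc k)) -> (forall k, Hle (hc k) (hc (S k))) ->
  Hwf h -> Hlub hc h -> is_lub FD (fun k => fixp (G (hc k))) (fixp (G h)).
Proof.
  intros W M Wh Lh.
  assert (Col : forall n, is_lub FD (fun k => kleene_iter (hc k) n) (kleene_iter h n)).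
  { induction n; [exact (lub_const (@dom_refl _ FT) botf) |].
    apply G_cont; auto using kleene_iter_wf.
    split; intro k; [apply kleene_iter_wf | apply kleene_iter_le]; auto. }
  apply (lub_exchange (@dom_trans Priv FT) (a := fun k n => kleene_iter (hc k) n)
           (s := kleene_iter h));
    auto using kleene_iter_wf, fixp_wf.
  - intro k. apply (fixp_kleene (W k)).
  - apply (fixp_kleene Wh).
Qed.

Lemma fixp_pure (p : Priv) h : Hwf h ->
  (forall g, pwf FD g -> pure p FT g -> pure p FT (G h g)) -> pure p FT (fixp (G h)).
Proof.
  intros Hh G_pure. destruct (fixp_kleene Hh) as [Wf Lf].
  apply (pure_lub (kleene_chain Hh)); auto.
  intro n. induction n; [| apply G_pure; auto using kleene_iter_wf].
  intros P d _ _. repeat split.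
Qed.

End LeastFixpoint.

Definition ople {Priv : Type} (o : option ty) : envT Priv o -> envT Priv o -> Prop :=
  match o return envT Priv o -> envT Priv o -> Prop with
  | Some t => ple (dom Priv t)
  | None => fun _ _ => True
  end.

Definition olub {Priv : Type} (o : option ty) : (nat -> envT Priv o) -> envT Priv o -> Prop :=
  match o return (nat -> envT Priv o) -> envT Priv o -> Prop with
  | Some t => is_lub (dom Priv t)
  | None => fun _ _ => True
  end.

Definition env_le {Priv : Type} (D : ctx) (h1 h2 : env Priv D) : Prop :=
  forall y, ople (h1 y) (h2 y).
Arguments env_le {Priv} D h1 h2.

Definition env_lub {Priv : Type} (D : ctx) (hc : nat -> env Priv D) (h : env Priv D) : Prop :=
  forall y, olub (fun k => hc k y) (h y).

Definition env_chain {Priv : Type} (D : ctx) (hc : nat -> env Priv D) : Prop :=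
  (forall k, env_wf D (hc k)) /\ (forall k, env_le D (hc k) (hc (S k))).

Arguments env_lub {Priv} D hc h.
Arguments env_chain {Priv} D hc.

Section Environments.
Context {Priv : Type}.

Lemma env_le_refl D (h : env Priv D) : env_le D h h.
Proof. intro y. generalize (h y). destruct (lookup D y); simpl; auto using dom_refl. Qed.

Lemma env_lub_const D (h : env Priv D) : env_lub D (fun _ => h) h.
Proof.
  intro y. generalize (h y). destruct (lookup D y); simpl; auto.
  intro v. exact (lub_const (@dom_refl _ t) v).
Qed.

Lemma const_env_chain D (h : env Priv D) : env_wf D h -> env_chain D (fun _ => h).
Proof. intros Hh. split; auto using env_le_refl. Qed.

Lemma const_chain t (v : sem Priv t) : pwf (dom Priv t) v -> chain (dom Priv t) (fun _ => v).
Proof. intros Hv. split; auto using dom_refl. Qed.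

Lemma env_chain_tail D (hc : nat -> env Priv D) k0 :
  env_chain D hc -> env_chain D (fun k => hc (k0 + k)).
Proof. intros [W M]. split; intro k; [apply W | rewrite Nat.add_succ_r; apply M]. Qed.

Lemma env_lub_tail D (hc : nat -> env Priv D) h k0 :
  env_chain D hc -> env_lub D hc h -> env_lub D (fun k => hc (k0 + k)) h.
Proof.
  intros [_ M] L y. specialize (L y).
  assert (My : forall k, ople ((fun k => hc k y) k) ((fun k => hc k y) (S k))) by (intro; apply M).
  change (olub (fun k => (fun k => hc k y) (k0 + k)) (h y)).
  revert L My. generalize (h y) (fun k => hc k y). clear.
  destruct (lookup D y); simpl; auto.
  intros v c L M. exact (lub_tail (@dom_refl _ t) (@dom_trans _ t) k0 M L).
Qed.

Section Extension.
Variables (D : ctx) (x : var) (t : ty).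

Lemma ext_wf (h : env Priv D) (v : sem Priv t) :
  env_wf D h -> pwf (dom Priv t) v -> env_wf ((x, t) :: D) (ext h x v).
Proof. intros Hh Hv y. unfold ext. simpl. destruct (Nat.eqb y x); auto. Qed.

Lemma ext_pure p (h : env Priv D) (v : sem Priv t) :
  env_pure p D h -> pure p t v -> env_pure p ((x, t) :: D) (ext h x v).
Proof. intros Hh Hv y. unfold ext. simpl. destruct (Nat.eqb y x); auto. Qed.

Lemma ext_le (h1 h2 : env Priv D) (v1 v2 : sem Priv t) :
  env_le D h1 h2 -> ple (dom Priv t) v1 v2 -> env_le ((x, t) :: D) (ext h1 x v1) (ext h2 x v2).
Proof. intros Hh Hv y. unfold ext. simpl. destruct (Nat.eqb y x); auto. Qed.

Lemma ext_lub (hc : nat -> env Priv D) h (vc : nat -> sem Priv t) v :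
  env_lub D hc h -> is_lub (dom Priv t) vc v ->
  env_lub ((x, t) :: D) (fun k => ext (hc k) x (vc k)) (ext h x v).
Proof. intros Hh Hv y. unfold ext. simpl. destruct (Nat.eqb y x); auto. Qed.

Lemma ext_chain (hc : nat -> env Priv D) (vc : nat -> sem Priv t) :
  env_chain D hc -> chain (dom Priv t) vc -> env_chain ((x, t) :: D) (fun k => ext (hc k) x (vc k)).
Proof. intros [W M] [Wv Mv]. split; intro k; [apply ext_wf | apply ext_le]; auto. Qed.

End Extension.

Section Lookup.
Variables (o : option ty) (t : ty) (E : o = Some t).

Lemma lookup_wf (v : envT Priv o) :
  @owf Priv o v -> pwf (dom Priv t) (eq_rect o (envT Priv) v (Some t) E).
Proof. subst. auto. Qed.

Lemma lookup_le (v1 v2 : envT Priv o) : ople v1 v2 ->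
  ple (dom Priv t) (eq_rect o (envT Priv) v1 (Some t) E) (eq_rect o (envT Priv) v2 (Some t) E).
Proof. subst. auto. Qed.

Lemma lookup_lub (vc : nat -> envT Priv o) v : olub vc v ->
  is_lub (dom Priv t) (fun k => eq_rect o (envT Priv) (vc k) (Some t) E)
    (eq_rect o (envT Priv) v (Some t) E).
Proof. subst. auto. Qed.

Lemma lookup_pure p (v : envT Priv o) :
  @opure Priv p o v -> pure p t (eq_rect o (envT Priv) v (Some t) E).
Proof. subst. auto. Qed.

End Lookup.

End Environments.

Definition lbind {X Y : Type} (u : lift X) (K : X -> lift Y) : lift Y :=
  match u with Bot => Bot | Star => Star | Val x => K x end.

Section Strictness.
Context {Priv : Type}.
Notation dm := (dom Priv).
Notation ld t := (lpo (dom Priv t)).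

Lemma lbind_wf t1 t2 (u : lift (sem Priv t1)) (K : sem Priv t1 -> lift (sem Priv t2)) :
  pwf (ld t1) u -> (forall x, pwf (dm t1) x -> pwf (ld t2) (K x)) -> pwf (ld t2) (lbind u K).
Proof. intros Hu HK. destruct u; [exact I | exact I | exact (HK _ Hu)]. Qed.

Lemma lbind_mono t1 t2 (u1 u2 : lift (sem Priv t1)) (K1 K2 : sem Priv t1 -> lift (sem Priv t2)) :
  ple (ld t1) u1 u2 -> pwf (ld t1) u1 -> pwf (ld t1) u2 ->
  (forall x1 x2, pwf (dm t1) x1 -> pwf (dm t1) x2 -> ple (dm t1) x1 x2 ->
     ple (ld t2) (K1 x1) (K2 x2)) ->
  ple (ld t2) (lbind u1 K1) (lbind u2 K2).
Proof.
  intros Hle W1 W2 HK. destruct u1, u2; cbn [lbind]; simpl in Hle; try tauto.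
  exact (HK _ _ W1 W2 Hle).
Qed.

(* Only the case of a chain that is eventually a chain of values needs an argument. *)
Lemma lbind_lub t1 t2 (c : nat -> lift (sem Priv t1)) l
    (K : nat -> sem Priv t1 -> lift (sem Priv t2)) (Kl : sem Priv t1 -> lift (sem Priv t2)) :
  chain (ld t1) c -> is_lub (ld t1) c l -> pwf (ld t1) l ->
  (forall k, ple (ld t2) (lbind (c k) (K k)) (lbind (c (S k)) (K (S k)))) ->
  (forall x k0 cx, l = Val x -> (forall k, c (k0 + k) = Val (cx k)) ->
     chain (dm t1) cx -> is_lub (dm t1) cx x -> pwf (dm t1) x ->
     is_lub (ld t2) (fun k => K (k0 + k) (cx k)) (Kl x)) ->
  is_lub (ld t2) (fun k => lbind (c k) (K k)) (lbind l Kl).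
Proof.
  intros Hc Hl Wl Mr HV.
  destruct (lift_lub_cases (@dom_refl _ t1) (@dom_trans _ t1) (@dom_has_lub _ t1) Hc Hl Wl)
    as [[E H] | [[E [k0 H]] | [x [k0 [cx [E [H1 [H2 H3]]]]]]]]; subst l.
  - split; [intro k; rewrite H | intros]; exact I.
  - apply (star_lub (@dom_refl _ t2) (@dom_trans _ t2) Mr (k0 := k0)).
    intros k Hk. rewrite H; auto.
  - apply (lub_untail (@ldom_refl _ t2) (@ldom_trans _ t2) (k0 := k0) Mr).
    replace (fun k => lbind (c (k0 + k)) (K (k0 + k))) with (fun k => K (k0 + k) (cx k))
      by (extensionality k; rewrite H1; reflexivity).
    apply HV; auto.
Qed.

End Strictness.

Section Continuity.
Context {Priv : Type}.
Notation dm := (dom Priv).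
Notation ld t := (lpo (dom Priv t)).

Record env_continuous (D : ctx) (t : ty) (F : env Priv D -> lift (sem Priv t)) : Prop := {
  cont_wf : forall h, env_wf D h -> pwf (ld t) (F h);
  cont_mono : forall h1 h2, env_wf D h1 -> env_wf D h2 -> env_le D h1 h2 ->
    ple (ld t) (F h1) (F h2);
  cont_lub : forall hc h, env_chain D hc -> env_wf D h -> env_lub D hc h ->
    is_lub (ld t) (fun k => F (hc k)) (F h) }.
Arguments env_continuous D {t} F.

Lemma continuous_const D t (u : lift (sem Priv t)) :
  pwf (ld t) u -> env_continuous D (fun _ => u).
Proof. intros Hu. split; auto using ldom_refl. intros. apply lub_const, ldom_refl. Qed.

Lemma continuous_var D x t (Hx : lookup D x = Some t) :
  env_continuous D (fun h : env Priv D => Val (eq_rect (lookup D x) (envT Priv) (h x) (Some t) Hx)).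
Proof.
  split.
  - intros h Hh. apply lookup_wf, Hh.
  - intros h1 h2 _ _ L. apply lookup_le, L.
  - intros hc h _ _ L. apply val_lub, lookup_lub, L.
Qed.

Lemma continuous_tail D t (F : env Priv D -> lift (sem Priv t)) hc h k0 :
  env_continuous D F -> env_chain D hc -> env_wf D h -> env_lub D hc h ->
  is_lub (ld t) (fun k => F (hc (k0 + k))) (F h).
Proof.
  intros HF Hc Wh Lh. apply (cont_lub HF); auto using env_chain_tail, env_lub_tail.
Qed.

Lemma continuous_chain D t (F : env Priv D -> lift (sem Priv t)) hc :
  env_continuous D F -> env_chain D hc -> chain (ld t) (fun k => F (hc k)).
Proof. intros HF Hc. split; intro k; [apply (cont_wf HF) | apply (cont_mono HF)]; apply Hc. Qed.

Section If.
Variables (D : ctx) (t : ty) (F0 : env Priv D -> lift (sem Priv TBool))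
  (F1 F2 : env Priv D -> lift (sem Priv t)).
Hypotheses (HF0 : env_continuous D F0)
  (HF1 : env_continuous D F1) (HF2 : env_continuous D F2).

Let Fif h := lbind (F0 h) (fun b : bool => if b then F1 h else F2 h).

Lemma continuous_if_mono h1 h2 : env_wf D h1 -> env_wf D h2 -> env_le D h1 h2 ->
  ple (ld t) (Fif h1) (Fif h2).
Proof.
  intros W1 W2 L. unfold Fif.
  apply lbind_mono; try apply (cont_wf HF0); try apply (cont_mono HF0); auto.
  intros b1 b2 _ _ <-. destruct b1; [apply (cont_mono HF1) | apply (cont_mono HF2)]; auto.
Qed.

Lemma continuous_if : env_continuous D Fif.
Proof.
  split; [| exact continuous_if_mono |]; unfold Fif.
  - intros h Hh. apply lbind_wf; [apply (cont_wf HF0); auto |].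
    intros [|] _; [apply (cont_wf HF1) | apply (cont_wf HF2)]; auto.
  - intros hc h Hc Wh Lh. apply lbind_lub.
    + apply continuous_chain; auto.
    + apply (cont_lub HF0); auto.
    + apply (cont_wf HF0); auto.
    + intro k. apply continuous_if_mono; apply Hc.
    + intros b k0 cb _ H1 _ Hb _.
      replace (fun k => if cb k then F1 (hc (k0 + k)) else F2 (hc (k0 + k)))
        with (fun k => if b then F1 (hc (k0 + k)) else F2 (hc (k0 + k)))
        by (extensionality k; rewrite (proj1 Hb k); reflexivity).
      destruct b; apply continuous_tail; auto.
Qed.

End If.

Definition lam_sem D x t1 t2 (F : privset Priv -> env Priv ((x, t1) :: D) -> lift (sem Priv t2))
  (h : env Priv D) : sem Priv (TArr t1 t2) :=
  fun P v => F P (ext h x v).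

Lemma continuous_lam D x t1 t2 (F : privset Priv -> env Priv ((x, t1) :: D) -> lift (sem Priv t2)) :
  (forall P, env_continuous _ (F P)) -> env_continuous D (fun h => Val (lam_sem F h)).
Proof.
  intros HF. split.
  - intros h Hh. split.
    + intros P v Hv. apply (cont_wf (HF P)), ext_wf; auto.
    + intros P c l Hc Wl Ll. apply (cont_lub (HF P) (hc := fun k => ext h x (c k))).
      * apply ext_chain; auto using const_env_chain.
      * apply ext_wf; auto.
      * apply ext_lub; auto using env_lub_const.
  - intros h1 h2 W1 W2 L P v Hv.
    apply (cont_mono (HF P)); auto using ext_wf, ext_le, dom_refl.
  - intros hc h Hc Wh Lh. apply val_lub, pointwise_lub. intros P v Hv.
    apply (cont_lub (HF P) (hc := fun k => ext (hc k) x v)).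
    + apply ext_chain; auto using const_chain.
    + apply ext_wf; auto.
    + apply ext_lub; auto. apply lub_const, dom_refl.
Qed.

Lemma app_mono t1 t2 (f1 f2 : sem Priv (TArr t1 t2)) (v1 v2 : sem Priv t1) P :
  pwf (dm (TArr t1 t2)) f1 -> pwf (dm (TArr t1 t2)) f2 -> pwf (dm t1) v1 -> pwf (dm t1) v2 ->
  ple (dm (TArr t1 t2)) f1 f2 -> ple (dm t1) v1 v2 -> ple (ld t2) (f1 P v1) (f2 P v2).
Proof.
  intros Wf1 Wf2 Wv1 Wv2 Lf Lv.
  apply ldom_trans with (f1 P v2); [apply fun_mono | apply Lf]; auto.
Qed.

Section App.
Variables (D : ctx) (t1 t2 : ty) (F1 : env Priv D -> lift (sem Priv (TArr t1 t2)))
  (F2 : env Priv D -> lift (sem Priv t1)) (P : privset Priv).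
Hypotheses (HF1 : env_continuous D F1) (HF2 : env_continuous D F2).

Let Fapp h := lbind (F1 h) (fun f : sem Priv (TArr t1 t2) => lbind (F2 h) (fun v => f P v)).

Lemma continuous_app_mono h1 h2 : env_wf D h1 -> env_wf D h2 -> env_le D h1 h2 ->
  ple (ld t2) (Fapp h1) (Fapp h2).
Proof.
  intros W1 W2 L. unfold Fapp.
  apply lbind_mono; try apply (cont_wf HF1); try apply (cont_mono HF1); auto.
  intros f1 f2 Wf1 Wf2 Lf.
  apply lbind_mono; try apply (cont_wf HF2); try apply (cont_mono HF2); auto.
  intros v1 v2 Wv1 Wv2 Lv. apply app_mono; auto.
Qed.

Lemma continuous_app : env_continuous D Fapp.
Proof.
  split; [| exact continuous_app_mono |]; unfold Fapp.
  - intros h Hh. apply lbind_wf; [apply (cont_wf HF1); auto |].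
    intros f Wf. apply lbind_wf; [apply (cont_wf HF2); auto |].
    intros v Wv. exact (proj1 Wf P v Wv).
  - intros hc h Hc Wh Lh. apply lbind_lub; auto using continuous_chain.
    + apply (cont_lub HF1); auto.
    + apply (cont_wf HF1); auto.
    + intro k. apply continuous_app_mono; apply Hc.
    + intros f k0 fc _ _ Hfc Lf Wf. apply lbind_lub.
      * apply (continuous_chain (hc := fun k => hc (k0 + k))); auto using env_chain_tail.
      * apply continuous_tail; auto.
      * apply (cont_wf HF2); auto.
      * intro k. rewrite Nat.add_succ_r.
        apply lbind_mono; try apply (cont_wf HF2); try apply (cont_mono HF2); try apply Hc.
        intros v1 v2 Wv1 Wv2 Lv. apply app_mono; auto; apply Hfc.
      * intros v k1 vc _ _ Hvc Lv Wv.
        apply (lub_diag (Fc := fun k => fc (k1 + k))); auto.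
        -- split; intro k; [apply Hfc | rewrite Nat.add_succ_r; apply Hfc].
        -- exact (lub_tail (@dom_refl _ _) (@dom_trans _ _) k1 (proj2 Hfc) Lf).
Qed.

End App.

Section Letrec.
Variables (D : ctx) (f x : var) (t1 t2 t : ty)
  (F1 : privset Priv -> env Priv ((x, t1) :: (f, TArr t1 t2) :: D) -> lift (sem Priv t2))
  (F2 : env Priv ((f, TArr t1 t2) :: D) -> lift (sem Priv t)).
Hypotheses (HF1 : forall P, env_continuous _ (F1 P)) (HF2 : env_continuous _ F2).

Definition rec_functional (h : env Priv D) (g : sem Priv (TArr t1 t2)) : sem Priv (TArr t1 t2) :=
  lam_sem F1 (ext h f g).

Let Hlam := continuous_lam HF1.

Lemma rec_functional_wf h g : env_wf D h -> pwf (dm (TArr t1 t2)) g ->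
  pwf (dm (TArr t1 t2)) (rec_functional h g).
Proof. intros Hh Hg. apply (cont_wf Hlam), ext_wf; auto. Qed.

Lemma rec_functional_mono h1 h2 g1 g2 : env_wf D h1 -> env_wf D h2 -> env_le D h1 h2 ->
  pwf (dm (TArr t1 t2)) g1 -> pwf (dm (TArr t1 t2)) g2 -> ple (dm (TArr t1 t2)) g1 g2 ->
  ple (dm (TArr t1 t2)) (rec_functional h1 g1) (rec_functional h2 g2).
Proof. intros. apply (cont_mono Hlam); auto using ext_wf, ext_le. Qed.

Lemma rec_functional_lub hc h gc g : (forall k, env_wf D (hc k)) ->
  (forall k, env_le D (hc k) (hc (S k))) -> env_wf D h -> env_lub D hc h ->
  chain (dm (TArr t1 t2)) gc -> is_lub (dm (TArr t1 t2)) gc g -> pwf (dm (TArr t1 t2)) g ->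
  is_lub (dm (TArr t1 t2)) (fun k => rec_functional (hc k) (gc k)) (rec_functional h g).
Proof.
  intros Wc Mc Wh Lh Cg Lg Wg.
  apply val_lub_inv, (cont_lub Hlam (hc := fun k => ext (hc k) f (gc k))).
  - apply ext_chain; auto. split; auto.
  - apply ext_wf; auto.
  - apply ext_lub; auto.
Qed.

Lemma rec_fixp_wf h : env_wf D h -> pwf (dm (TArr t1 t2)) (fixp (rec_functional h)).
Proof.
  exact (fixp_wf (@env_le_refl _ D) (@env_lub_const _ D)
           rec_functional_wf rec_functional_mono rec_functional_lub (h := h)).
Qed.

Lemma rec_fixp_mono h1 h2 : env_wf D h1 -> env_wf D h2 -> env_le D h1 h2 ->
  ple (dm (TArr t1 t2)) (fixp (rec_functional h1)) (fixp (rec_functional h2)).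
Proof.
  exact (fixp_mono (@env_le_refl _ D) (@env_lub_const _ D)
           rec_functional_wf rec_functional_mono rec_functional_lub (h1 := h1) (h2 := h2)).
Qed.

Lemma rec_fixp_lub hc h : (forall k, env_wf D (hc k)) -> (forall k, env_le D (hc k) (hc (S k))) ->
  env_wf D h -> env_lub D hc h ->
  is_lub (dm (TArr t1 t2)) (fun k => fixp (rec_functional (hc k))) (fixp (rec_functional h)).
Proof.
  exact (fixp_cont (@env_le_refl _ D) (@env_lub_const _ D)
           rec_functional_wf rec_functional_mono rec_functional_lub (hc := hc) (h := h)).
Qed.

Lemma rec_fixp_pure p h : env_wf D h ->
  (forall g, pwf (dm (TArr t1 t2)) g -> pure p (TArr t1 t2) g ->
     pure p (TArr t1 t2) (rec_functional h g)) ->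
  pure p (TArr t1 t2) (fixp (rec_functional h)).
Proof.
  exact (fixp_pure (@env_le_refl _ D) (@env_lub_const _ D)
           rec_functional_wf rec_functional_mono rec_functional_lub (p := p) (h := h)).
Qed.

Lemma continuous_letrec : env_continuous D (fun h => F2 (ext h f (fixp (rec_functional h)))).
Proof.
  split.
  - intros h Hh. apply (cont_wf HF2), ext_wf; auto using rec_fixp_wf.
  - intros h1 h2 W1 W2 L.
    apply (cont_mono HF2); auto using ext_wf, ext_le, rec_fixp_wf, rec_fixp_mono.
  - intros hc h [Wc Mc] Wh Lh.
    apply (cont_lub HF2 (hc := fun k => ext (hc k) f (fixp (rec_functional (hc k))))).
    + apply ext_chain; [split; auto | split; auto using rec_fixp_wf, rec_fixp_mono].
    + apply ext_wf; auto using rec_fixp_wf.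
    + apply ext_lub; auto using rec_fixp_lub.
Qed.

End Letrec.

End Continuity.
Arguments env_continuous {Priv} D {t} F.

Lemma den_continuous {Princ Priv : Type} (A : Princ -> privset Priv) D (e : expr Princ Priv) t
  (d : typed D e t) (n : Princ) (P : privset Priv) : env_continuous D (den A d n P).
Proof.
  induction d in n, P |- *; cbn [den].
  - apply continuous_const. exact I.
  - apply continuous_var.
  - exact (continuous_if (IHd1 n P) (IHd2 n P) (IHd3 n P)).
  - exact (continuous_lam (fun P' => IHd n P')).
  - exact (continuous_app P (IHd1 n P) (IHd2 n P)).
  - exact (continuous_letrec (fun P' => IHd1 n P') (IHd2 n P)).
  - apply IHd.
  - apply IHd.
  - destruct (dec (P p)); [apply IHd | apply continuous_const; exact I].
  - destruct (dec (P p)); [apply IHd1 | apply IHd2].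
Qed.

Section Purity.
Context {Priv : Type} (p : Priv).
Notation dm := (dom Priv).
Notation ld t := (lpo (dom Priv t)).

Lemma seq_l_refl t (u : lift (sem Priv t)) : seq_l t u u.
Proof. split; apply ldom_refl. Qed.

Lemma seq_l_trans t (u v w : lift (sem Priv t)) : seq_l t u v -> seq_l t v w -> seq_l t u w.
Proof. intros [H1 H2] [H3 H4]. split; eapply ldom_trans; eauto. Qed.

Lemma seq_lbind t1 t2 (u1 u2 : lift (sem Priv t1)) (K1 K2 : sem Priv t1 -> lift (sem Priv t2)) :
  seq_l t1 u1 u2 -> pure_l p t1 u1 -> pwf (ld t1) u1 -> pwf (ld t1) u2 ->
  (forall x1 x2, pwf (dm t1) x1 -> pwf (dm t1) x2 -> peq (dm t1) x1 x2 -> pure p t1 x1 ->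
     seq_l t2 (K1 x1) (K2 x2) /\ pure_l p t2 (K1 x1)) ->
  seq_l t2 (lbind u1 K1) (lbind u2 K2) /\ pure_l p t2 (lbind u1 K1).
Proof.
  intros [H1 H2] Hp W1 W2 HK.
  destruct u1, u2; simpl in H1, H2; try tauto; cbn [lbind];
    [split; [apply seq_l_refl | exact I] .. | apply HK; auto; split; auto].
Qed.

Lemma pure_apply t1 t2 (f1 f2 : sem Priv (TArr t1 t2)) (v1 v2 : sem Priv t1) P :
  pwf (dm (TArr t1 t2)) f1 -> pwf (dm (TArr t1 t2)) f2 -> pwf (dm t1) v1 -> pwf (dm t1) v2 ->
  peq (dm (TArr t1 t2)) f1 f2 -> peq (dm t1) v1 v2 -> pure p (TArr t1 t2) f1 -> pure p t1 v1 ->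
  seq_l t2 (f1 P v1) (f2 (setminus1 P p) v2) /\ pure_l p t2 (f1 P v1).
Proof.
  intros Wf1 Wf2 Wv1 Wv2 [Lf1 Lf2] [Lv1 Lv2] Pf Pv.
  destruct (Pf P v1 Wv1 Pv) as [Pr Sr]. split; [| exact Pr].
  apply (seq_l_trans Sr). split; apply app_mono; auto.
Qed.

Definition pure_den D t (F : privset Priv -> env Priv D -> lift (sem Priv t)) : Prop :=
  forall P h, env_wf D h -> env_pure p D h ->
    seq_l t (F P h) (F (setminus1 P p) h) /\ pure_l p t (F P h).

Lemma pure_den_if D t (F0 : privset Priv -> env Priv D -> lift (sem Priv TBool))
    (F1 F2 : privset Priv -> env Priv D -> lift (sem Priv t)) :
  (forall P, env_continuous D (F0 P)) -> pure_den F0 -> pure_den F1 -> pure_den F2 ->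
  pure_den (fun P h => lbind (F0 P h) (fun b : bool => if b then F1 P h else F2 P h)).
Proof.
  intros HF0 HP0 HP1 HP2 P h Hh Hph. destruct (HP0 P h Hh Hph) as [S0 P0].
  apply seq_lbind; auto; try apply (cont_wf (HF0 _)); auto.
  intros b b' _ _ [<- _] _. destruct b; [apply HP1 | apply HP2]; auto.
Qed.

Lemma pure_lam_sem D x t1 t2 (F : privset Priv -> env Priv ((x, t1) :: D) -> lift (sem Priv t2)) h :
  pure_den F -> env_wf D h -> env_pure p D h -> pure p (TArr t1 t2) (lam_sem F h).
Proof.
  intros HF Hh Hph P v Hv Hpv.
  destruct (HF P (ext h x v)) as [S Pu]; auto using ext_wf, ext_pure.
Qed.

Lemma pure_den_lam D x t1 t2 (F : privset Priv -> env Priv ((x, t1) :: D) -> lift (sem Priv t2)) :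
  pure_den F -> pure_den (fun _ h => Val (lam_sem F h)).
Proof. intros HF P h Hh Hph. split; [apply seq_l_refl | apply pure_lam_sem; auto]. Qed.

Lemma pure_den_app D t1 t2 (F1 : privset Priv -> env Priv D -> lift (sem Priv (TArr t1 t2)))
    (F2 : privset Priv -> env Priv D -> lift (sem Priv t1)) :
  (forall P, env_continuous D (F1 P)) -> (forall P, env_continuous D (F2 P)) ->
  pure_den F1 -> pure_den F2 ->
  pure_den (fun P h =>
    lbind (F1 P h) (fun f : sem Priv (TArr t1 t2) => lbind (F2 P h) (fun v => f P v))).
Proof.
  intros HF1 HF2 HP1 HP2 P h Hh Hph.
  destruct (HP1 P h Hh Hph) as [S1 P1]. destruct (HP2 P h Hh Hph) as [S2 P2].
  apply seq_lbind; auto; try apply (cont_wf (HF1 _)); auto.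
  intros f1 f2 Wf1 Wf2 Ef Pf.
  apply seq_lbind; auto; try apply (cont_wf (HF2 _)); auto.
  intros v1 v2 Wv1 Wv2 Ev Pv. apply pure_apply; auto.
Qed.

Lemma pure_den_letrec D f x t1 t2 t
    (F1 : privset Priv -> env Priv ((x, t1) :: (f, TArr t1 t2) :: D) -> lift (sem Priv t2))
    (F2 : privset Priv -> env Priv ((f, TArr t1 t2) :: D) -> lift (sem Priv t)) :
  (forall P, env_continuous _ (F1 P)) -> pure_den F1 -> pure_den F2 ->
  pure_den (fun P h => F2 P (ext h f (fixp (rec_functional F1 h)))).
Proof.
  intros HF1 HP1 HP2 P h Hh Hph.
  apply HP2; [apply ext_wf | apply ext_pure]; auto using rec_fixp_wf.
  apply rec_fixp_pure; auto. intros g Wg Pg.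
  apply pure_lam_sem; auto using ext_wf, ext_pure.
Qed.

End Purity.

Section PrivilegeSets.
Context {Princ Priv : Type} (A : Princ -> privset Priv).

Lemma privset_ext (P Q : privset Priv) : (forall q, P q <-> Q q) -> P = Q.
Proof. intros H. extensionality q. apply propositional_extensionality, H. Qed.

Lemma dec_iff (Q1 Q2 : Prop) : (Q1 <-> Q2) -> dec Q1 = dec Q2.
Proof.
  intros H. unfold dec.
  destruct (excluded_middle_informative Q1), (excluded_middle_informative Q2); tauto.
Qed.

Lemma dec_setminus1 (P : privset Priv) p q : q <> p -> dec (setminus1 P p q) = dec (P q).
Proof. intros Hq. apply dec_iff. unfold setminus1. tauto. Qed.

Lemma setminus1_meet (P Q : privset Priv) p :
  setminus1 (fun q => P q /\ Q q) p = (fun q => setminus1 P p q /\ Q q).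
Proof. apply privset_ext. unfold setminus1. tauto. Qed.

(* Removing [p] commutes with [dopriv p0], except that [dopriv p] may restore it. *)
Lemma join_priv_setminus1 n (P : privset Priv) p p0 :
  join_priv A n (setminus1 P p) p0 = join_priv A n P p0 \/
  join_priv A n (setminus1 P p) p0 = setminus1 (join_priv A n P p0) p.
Proof.
  unfold join_priv. destruct (dec (A n p0)); [| right; reflexivity].
  destruct (classic (p0 = p)) as [-> | Hne]; [left | right]; apply privset_ext;
    intro q; unfold setminus1; destruct (classic (q = p)); intuition congruence.
Qed.

End PrivilegeSets.

Lemma den_pure {Princ Priv : Type} (A : Princ -> privset Priv) (p : Priv) D (e : expr Princ Priv) t
  (d : typed D e t) : ppure p e -> forall n, pure_den p (den A d n).
Proof.
  induction d; intros He m; cbn [ppure] in He; cbn [den].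
  - intros P h _ _. split; [apply seq_l_refl | exact I].
  - intros P h _ Hph. split; [apply seq_l_refl | apply lookup_pure, Hph].
  - destruct He as (He0 & He1 & He2).
    exact (pure_den_if (den_continuous A d1 m) (IHd1 He0 m) (IHd2 He1 m) (IHd3 He2 m)).
  - exact (pure_den_lam (IHd He m)).
  - destruct He as [He1 He2].
    exact (pure_den_app (den_continuous A d1 m) (den_continuous A d2 m) (IHd1 He1 m) (IHd2 He2 m)).
  - destruct He as [He1 He2].
    exact (pure_den_letrec (den_continuous A d1 m) (IHd1 He1 m) (IHd2 He2 m)).
  - intros P h Hh Hph. rewrite <- setminus1_meet. apply IHd; auto.
  - intros P h Hh Hph.
    destruct (join_priv_setminus1 A m P p p0) as [-> | ->]; [| apply IHd; auto].
    split; [apply seq_l_refl | apply IHd; auto].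
  - destruct He as [Hq He]. intros P h Hh Hph. rewrite dec_setminus1 by exact Hq.
    destruct (dec (P p0)); [apply IHd; auto | split; [apply seq_l_refl | exact I]].
  - destruct He as (Hq & He1 & He2). intros P h Hh Hph. rewrite dec_setminus1 by exact Hq.
    destruct (dec (P p0)); [apply IHd1 | apply IHd2]; auto.
Qed.

Theorem lemma4 (Princ Priv : Type) (A : Princ -> Priv -> Prop) (p : Priv)
  (D : ctx) (e : expr Princ Priv) (t : ty) (d : typed D e t) :
  ppure p e ->
  forall (n : Princ) (P : privset Priv) (h : env Priv D),
    env_wf D h -> env_pure p D h ->
    seq_l t (den A d n P h) (den A d n (setminus1 P p) h) /\
    pure_l p t (den A d n P h).
Proof. intros He n. exact (den_pure A d He n). Qed.
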